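(* Let $\mathcal F$ be a proper family on an infinite set $Q$. Then: (a) $\mathcal F^{\#}$ is a filter contained in $\mathcal F\cap\mathcal F^*$, and it is full if $\mathcal F$ is full; (b) $\mathcal F^{\#}=(\mathcal F^* )^{\#}$; (c) if $\mathcal F$ is a filter then $\mathcal F^{\#}=\mathcal F$; in particular $(\mathcal F^{\#})^{\#}=\mathcal F^{\#}$; (d) if $\mathcal F$ is a filterdual then $\mathcal F^{\#}=\mathcal F^*$.
   Context: A family on $Q$ is a collection $\mathcal F$ of subsets of $Q$ closed under supersets ($A\in\mathcal F$, $A\subset B\subset Q$ implies $B\in\mathcal F$). It is proper if $\mathcal F\ne\emptyset$ and $\emptyset\notin\mathcal F$. The dual is $\mathcal F^*=\{B\subset Q: B\cap A\ne\emptyset\text{ for all }A\in\mathcal F\}$. A filter is a proper family closed under finite intersections; a filterdual is the dual of a filter, equivalently a proper family with $A_1\cup A_2\in\mathcal F\Rightarrow A_1\in\mathcal F$ or $A_2\in\mathcal F$. A family $\mathcal F$ is full if it is proper and $B\in\mathcal F$ implies $B\setminus F\in\mathcal F$ for every finite $F\subset Q$. The sharp dual is $\mathcal F^{\#}=\{A\subset Q: A\cap B\in\mathcal F\text{ for all }B\in\mathcal F\}$. *)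

From HB Require Import structures.
From mathcomp Require Import all_boot.
From mathcomp Require Import boolp classical_sets cardinality.
Set Implicit Arguments. Unset Strict Implicit. Unset Printing Implicit Defensive.
Local Open Scope classical_set_scope.

Definition is_family (Q : Type) (F : set (set Q)) : Prop :=
  forall A B : set Q, F A -> A `<=` B -> F B.

Definition proper_family (Q : Type) (F : set (set Q)) : Prop :=
  [/\ is_family F, F !=set0 & ~ F set0].

Definition fam_dual (Q : Type) (F : set (set Q)) : set (set Q) :=
  [set B | forall A, F A -> B `&` A !=set0].

Definition fam_filter (Q : Type) (F : set (set Q)) : Prop :=
  proper_family F /\ (forall A B, F A -> F B -> F (A `&` B)).

Definition fam_filterdual (Q : Type) (F : set (set Q)) : Prop :=
  exists G : set (set Q), fam_filter G /\ F = fam_dual G.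

Definition fam_full (Q : Type) (F : set (set Q)) : Prop :=
  proper_family F /\
  (forall B E : set Q, F B -> finite_set E -> F (B `\` E)).

Definition fam_sharp (Q : Type) (F : set (set Q)) : set (set Q) :=
  [set A | forall B, F B -> F (A `&` B)].

From mathcomp Require Import all_boot.
From mathcomp Require Import boolp classical_sets cardinality.
Set Implicit Arguments. Unset Strict Implicit. Unset Printing Implicit Defensive.
Local Open Scope classical_set_scope.

(* The key fact is that for a family F, the complement of X meets every
   member of F exactly when X is not in F.  Hence the dual is an involution on
   families, and membership of A \cap B in F can be tested against the dual of
   F, so F and its dual have the same sharp dual.  The rest is direct: once F
   is nonempty and omits the empty set, a member A of the sharp dual satisfies
   A \cap B in F for every B in F, so A lies in F and meets every member of F. *)

Section SharpDual.
Variable Q : Type.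
Implicit Types (F G : set (set Q)) (A B X : set Q).

Lemma fam_dualC F X : is_family F -> fam_dual F (~` X) <-> ~ F X.
Proof.
move=> famF; split=> [dualFX FX | nFX A FA].
  by have [x [nXx Xx]] := dualFX X FX.
apply: contrapT => /forallNP AX; apply: nFX; apply: (famF _ _ FA) => x Ax.
by apply: contrapT => nXx; apply: (AX x).
Qed.

Lemma fam_dualK G : is_family G -> fam_dual (fam_dual G) = G.
Proof.
move=> famG; apply/seteqP; split=> X.
  move=> ddX; apply: contrapT => /(fam_dualC X famG) dualGnX.
  by have [x [Xx nXx]] := ddX _ dualGnX.
by move=> GX C dualGC; have [x [Cx Xx]] := dualGC X GX; exists x.
Qed.

Lemma fam_sharp_family F : is_family F -> is_family (fam_sharp F).
Proof.
move=> famF A A' sharpA AA' B FB; apply: (famF _ _ (sharpA B FB)).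
exact: setSI.
Qed.

Lemma fam_sharpT F : fam_sharp F setT.
Proof. by move=> B FB; rewrite setTI. Qed.

Lemma fam_sharpI F A B :
  fam_sharp F A -> fam_sharp F B -> fam_sharp F (A `&` B).
Proof. by move=> sharpA sharpB C FC; rewrite -setIA; apply/sharpA/sharpB. Qed.

Lemma fam_sharp_sub F : is_family F -> F !=set0 -> fam_sharp F `<=` F.
Proof. by move=> famF [B FB] A sharpA; apply: (famF _ _ (sharpA B FB)); apply: subIsetl. Qed.

Lemma fam_sharp_sub_dual F : ~ F set0 -> fam_sharp F `<=` fam_dual F.
Proof.
move=> nF0 A sharpA B FB; apply/set0P/eqP => AB0.
by apply: nF0; rewrite -AB0; apply: sharpA.
Qed.

Lemma fam_sharp_filter F : proper_family F -> fam_filter (fam_sharp F).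
Proof.
move=> [famF F_neq0 nF0]; split; last by move=> A B; apply: fam_sharpI.
split; [exact: fam_sharp_family | by exists setT; apply: fam_sharpT |].
by move=> /(fam_sharp_sub famF F_neq0) /nF0.
Qed.

Lemma fam_sharp_full F : fam_full F -> fam_full (fam_sharp F).
Proof.
move=> [properF fullF]; split=> [|A E sharpA finE B FB].
  exact: (fam_sharp_filter properF).1.
by rewrite setIDAC setIDA; apply: (fullF _ _ (sharpA B FB) finE).
Qed.

Lemma fam_sharp_dual F : is_family F -> fam_sharp F = fam_sharp (fam_dual F).
Proof.
move=> famF; apply/seteqP; split=> A sharpA.
  move=> C dualFC D FD; have [x [Cx [Ax Dx]]] := dualFC _ (sharpA D FD).
  by exists x.
move=> B FB; apply: contrapT => /(fam_dualC _ famF) dualFnAB.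
by have [x [[Ax nABx] Bx]] := sharpA _ dualFnAB B FB; apply: nABx.
Qed.

Lemma fam_sharp_filter_id F : fam_filter F -> fam_sharp F = F.
Proof.
move=> [[famF F_neq0 _] capF]; apply/seteqP; split.
  exact: fam_sharp_sub.
by move=> A FA B FB; apply: capF.
Qed.

Lemma fam_sharp_filterdual F : fam_filterdual F -> fam_sharp F = fam_dual F.
Proof.
move=> [G [filterG ->]]; have [[famG _ _] _] := filterG.
by rewrite -fam_sharp_dual // fam_sharp_filter_id // fam_dualK.
Qed.

End SharpDual.

Theorem proposition5p1 (Q : Type) (F : set (set Q)) :
  infinite_set (@setT Q) -> proper_family F ->
  [/\ (fam_filter (fam_sharp F) /\ fam_sharp F `<=` F `&` fam_dual F /\
        (fam_full F -> fam_full (fam_sharp F))),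
      fam_sharp F = fam_sharp (fam_dual F),
      (fam_filter F -> fam_sharp F = F /\ fam_sharp (fam_sharp F) = fam_sharp F)
    & (fam_filterdual F -> fam_sharp F = fam_dual F)].
Proof.
move=> _ properF; have [famF F_neq0 nF0] := properF.
have filter_sharp := fam_sharp_filter properF.
split.
- split=> //; split; last exact: fam_sharp_full.
  by move=> A sharpA; split;
    [exact: fam_sharp_sub | exact: fam_sharp_sub_dual].
- exact: fam_sharp_dual.
- move=> filterF; split; first exact: fam_sharp_filter_id.
  exact: fam_sharp_filter_id.
- exact: fam_sharp_filterdual.
Qed.
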